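(* Let $\mathbb{F}$ be a field with $\mathrm{char}(\mathbb{F})\neq2$, let $X$ be a unitary alternative $\mathbb{F}$-algebra, $B$ an alternative $\mathbb{F}$-algebra and $\varphi\colon B\to X$ an algebra homomorphism (not required to preserve units). Then the vector space $B\oplus X$ with multiplication $$(b,x)\cdot(b',x')=(bb',\;xx'+\varphi(b)x'+x\varphi(b'))$$ is an alternative algebra, and together with the inclusion $x\mapsto(0,x)$, the projection $(b,x)\mapsto b$ and the section $b\mapsto(b,0)$ it forms a split extension of $B$ by $X$ in $\mathbf{Alt}$.
   Context: An alternative algebra is a non-associative algebra satisfying $(yx)x=y(xx)$ and $x(xy)=(xx)y$; $\mathbf{Alt}$ is the category of such algebras with multiplicative linear maps. A split extension of $B$ by $X$ is a diagram $X\xrightarrow{k}A\underset{\beta}{\overset{\alpha}{\rightleftarrows}}B$ with $\alpha\circ\beta=\mathrm{id}_B$ and $(X,k)$ a kernel of $\alpha$. *)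

(* Non-associative algebras over a field F are modelled as
   an lmodType F together with a bilinear multiplication. *)
From HB Require Import structures.
From mathcomp Require Import all_boot all_order all_algebra.
Set Implicit Arguments. Unset Strict Implicit. Unset Printing Implicit Defensive.
Import GRing.Theory.
Local Open Scope ring_scope.

Section NonAssoc.
Variable F : fieldType.

Definition bilinear_mul (V : lmodType F) (m : V -> V -> V) : Prop :=
  (forall (a : F) (x y z : V), m (a *: x + y) z = a *: m x z + m y z) /\
  (forall (a : F) (x y z : V), m x (a *: y + z) = a *: m x y + m x z).

Definition alternative_law (V : lmodType F) (m : V -> V -> V) : Prop :=
  (forall x y : V, m (m y x) x = m y (m x x)) /\
  (forall x y : V, m x (m x y) = m (m x x) y).

Definition alt_algebra (V : lmodType F) (m : V -> V -> V) : Prop :=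
  bilinear_mul m /\ alternative_law m.

Definition unitary (V : lmodType F) (m : V -> V -> V) : Prop :=
  exists e : V, forall x : V, m e x = x /\ m x e = x.

Definition alg_hom (U V : lmodType F) (mU : U -> U -> U) (mV : V -> V -> V)
  (f : U -> V) : Prop :=
  (forall (a : F) (x y : U), f (a *: x + y) = a *: f x + f y) /\
  (forall x y : U, f (mU x y) = mV (f x) (f y)).

(* (X, k) is a kernel of alpha : A -> B in Alt (the zero morphism is the
   constant-0 map, as the zero algebra is a zero object of Alt) *)
Definition is_kernel (X A B : lmodType F) (mX : X -> X -> X) (mA : A -> A -> A)
  (k : X -> A) (alpha : A -> B) : Prop :=
  (forall x : X, alpha (k x) = 0) /\
  (forall (C : lmodType F) (mC : C -> C -> C), alt_algebra mC ->
     forall f : C -> A, alg_hom mC mA f -> (forall c : C, alpha (f c) = 0) ->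
     exists g : C -> X,
       (alg_hom mC mX g /\ (forall c : C, k (g c) = f c)) /\
       (forall g' : C -> X, alg_hom mC mX g' -> (forall c : C, k (g' c) = f c) ->
          forall c : C, g' c = g c)).

Definition split_extension (X A B : lmodType F) (mX : X -> X -> X)
  (mA : A -> A -> A) (mB : B -> B -> B)
  (k : X -> A) (alpha : A -> B) (beta : B -> A) : Prop :=
  (alt_algebra mX /\ alt_algebra mA /\ alt_algebra mB) /\
  (alg_hom mX mA k /\ alg_hom mA mB alpha /\ alg_hom mB mA beta) /\
  (forall b : B, alpha (beta b) = b) /\
  is_kernel mX mA k alpha.

Definition sd_mul (B X : lmodType F) (mB : B -> B -> B) (mX : X -> X -> X)
  (phi : B -> X) (p q : (B * X)%type) : (B * X)%type :=
  (mB p.1 q.1, mX p.2 q.2 + mX (phi p.1) q.2 + mX p.2 (phi q.1)).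

Definition sd_incl (B X : lmodType F) (x : X) : (B * X)%type := (0, x).
Definition sd_proj (B X : lmodType F) (p : (B * X)%type) : B := p.1.
Definition sd_sect (B X : lmodType F) (b : B) : (B * X)%type := (b, 0).

End NonAssoc.

(* The map (b, x) |-> x + phi b is multiplicative from B (+) X to X, so the
   X-component of a product is [psi p * psi q - phi p.1 * phi q.1] with
   [psi p = p.2 + phi p.1].  Bilinearity and the alternative laws of B (+) X
   are therefore inherited componentwise from those of B and X.  A morphism
   into B (+) X killed by the projection lands in 0 (+) X, where the product
   is that of X, which gives the kernel property. *)
From HB Require Import structures.
From mathcomp Require Import all_boot all_order all_algebra.
Set Implicit Arguments. Unset Strict Implicit. Unset Printing Implicit Defensive.
Import GRing.Theory.
Local Open Scope ring_scope.

Section BilinearMul.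
Variables (F : fieldType) (V : lmodType F) (m : V -> V -> V).
Hypothesis bm : bilinear_mul m.

Lemma bmulDl x y z : m (x + y) z = m x z + m y z.
Proof. by have := bm.1 1 x y z; rewrite !scale1r. Qed.

Lemma bmulDr x y z : m x (y + z) = m x y + m x z.
Proof. by have := bm.2 1 x y z; rewrite !scale1r. Qed.

Lemma bmul0l z : m 0 z = 0.
Proof. by apply: (addrI (m 0 z)); rewrite addr0 -bmulDl addr0. Qed.

Lemma bmul0r z : m z 0 = 0.
Proof. by apply: (addrI (m z 0)); rewrite addr0 -bmulDr addr0. Qed.

End BilinearMul.

Lemma linear_map0 (F : fieldType) (U V : lmodType F) (f : U -> V) :
  (forall (a : F) (x y : U), f (a *: x + y) = a *: f x + f y) -> f 0 = 0.
Proof.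
move=> lf; apply: (addrI (f 0)).
by have := lf 1 0 0; rewrite !scale1r !addr0.
Qed.

Section SemidirectProduct.
Variables (F : fieldType) (B X : lmodType F).
Variables (mB : B -> B -> B) (mX : X -> X -> X) (phi : B -> X).
Hypotheses (bB : bilinear_mul mB) (bX : bilinear_mul mX).
Hypothesis phi_hom : alg_hom mB mX phi.

Let sdm := sd_mul mB mX phi.

Definition sd_collapse (p : B * X) : X := p.2 + phi p.1.

Lemma phi0 : phi 0 = 0.
Proof. exact: linear_map0 phi_hom.1. Qed.

Lemma sd_collapse_linear a p q :
  sd_collapse (a *: p + q) = a *: sd_collapse p + sd_collapse q.
Proof.
rewrite /sd_collapse /= phi_hom.1 scalerDr.
by rewrite -!addrA; congr (_ + _); rewrite addrCA.
Qed.

Lemma sd_mul_sndE p q :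
  (sdm p q).2 = mX (sd_collapse p) (sd_collapse q) - mX (phi p.1) (phi q.1).
Proof.
case: p q => [b x] [b' x']; rewrite /sdm /sd_mul /sd_collapse /=.
rewrite !(bmulDl bX) !(bmulDr bX) -!addrA subrr addr0.
by congr (_ + _); rewrite addrC.
Qed.

Lemma sd_collapse_mul p q :
  sd_collapse (sdm p q) = mX (sd_collapse p) (sd_collapse q).
Proof. by rewrite {1}/sd_collapse sd_mul_sndE /= phi_hom.2 addrNK. Qed.

Lemma sd_bilinear : bilinear_mul sdm.
Proof.
split=> a p q r; apply: injective_projections.
- by rewrite /= bB.1.
- rewrite -[RHS]/(a *: (sdm p r).2 + (sdm q r).2).
  rewrite !sd_mul_sndE sd_collapse_linear /= phi_hom.1 !bX.1 scalerBr.
  by rewrite opprD addrACA.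
- by rewrite /= bB.2.
- rewrite -[RHS]/(a *: (sdm p q).2 + (sdm p r).2).
  rewrite !sd_mul_sndE sd_collapse_linear /= phi_hom.1 !bX.2 scalerBr.
  by rewrite opprD addrACA.
Qed.

Lemma sd_alternative : alternative_law mB -> alternative_law mX ->
  alternative_law sdm.
Proof.
move=> [aB1 aB2] [aX1 aX2]; split=> p q; apply: injective_projections.
- by rewrite /= aB1.
- by rewrite !sd_mul_sndE !sd_collapse_mul /= !phi_hom.2 !aX1.
- by rewrite /= aB2.
- by rewrite !sd_mul_sndE !sd_collapse_mul /= !phi_hom.2 !aX2.
Qed.

Lemma sd_incl_hom : alg_hom mX sdm (@sd_incl F B X).
Proof.
split=> [a x y|x y]; first by apply: injective_projections; rewrite /= ?scaler0 ?addr0.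
by rewrite /sdm /sd_mul /sd_incl /= phi0 (bmul0l bB) (bmul0l bX) (bmul0r bX) !addr0.
Qed.

Lemma sd_proj_hom : alg_hom sdm mB (@sd_proj F B X).
Proof. by []. Qed.

Lemma sd_sect_hom : alg_hom mB sdm (@sd_sect F B X).
Proof.
split=> [a x y|x y]; first by apply: injective_projections; rewrite /= ?scaler0 ?addr0.
by rewrite /sdm /sd_mul /sd_sect /= !(bmul0l bX) (bmul0r bX) !addr0.
Qed.

Lemma sd_proj_kernel : is_kernel mX sdm (@sd_incl F B X) (@sd_proj F B X).
Proof.
split=> // C mC _ f [lf mf] fK.
have f_incl c : sd_incl B (f c).2 = f c.
  by rewrite /sd_incl -(fK c); case: (f c).
exists (fun c => (f c).2); split=> [|g' _ kg' c]; last by rewrite -kg'.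
split=> //; split=> [a c c'|c c']; first by rewrite lf.
by rewrite mf -[f c]f_incl -[f c']f_incl -sd_incl_hom.2.
Qed.

End SemidirectProduct.

Theorem mainTheorem5 (F : fieldType) (B X : lmodType F)
  (mB : B -> B -> B) (mX : X -> X -> X) (phi : B -> X) :
  (2%:R : F) != 0 ->
  alt_algebra mX -> unitary mX ->
  alt_algebra mB ->
  alg_hom mB mX phi ->
  alt_algebra (sd_mul mB mX phi) /\
  split_extension mX (sd_mul mB mX phi) mB
    (@sd_incl F B X) (@sd_proj F B X) (@sd_sect F B X).
Proof.
move=> _ [bX aX] _ [bB aB] phi_hom.
have sd_alt : alt_algebra (sd_mul mB mX phi).
  by split; [exact: sd_bilinear | exact: sd_alternative].
split=> //; split; first by split.
split; first split; [exact: sd_incl_hom | split; [exact: sd_proj_hom |] |].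
- exact: sd_sect_hom.
- by split=> //; exact: sd_proj_kernel.
Qed.
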